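(* For integers $n\ge1$, $m\ge0$, $$\operatorname{Tr}(J_nB_n^{2m})=n\sum_{\pi\in\mathcal{D}_m}w(\pi),$$ where $\mathcal{D}_m$ is the set of Dyck paths of length $2m$ (lattice paths from height $0$ to height $0$ with $m$ up steps $(1,1)$ and $m$ down steps $(1,-1)$, never going below height $0$), and the weight $w(\pi)$ is the product of the weights of its steps: an up step from height $k-1$ to height $k$ has weight $a_{k-1}=\frac{n-k}{2k-1}$ and a down step from height $k$ to height $k-1$ has weight $b_k=\frac{n+k}{2k+1}$ ($k\ge1$). The empty path has weight $1$.
   Context: $J_n$ is the $n\times n$ all-ones matrix, and $B_n=i\,M$ where $M$ is the $n\times n$ matrix with zero diagonal, entries $1$ above and $-1$ below the diagonal. *)

From HB Require Import structures.
From mathcomp Require Import all_boot all_order all_algebra.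
Set Implicit Arguments. Unset Strict Implicit. Unset Printing Implicit Defensive.
Import Order.TTheory GRing.Theory Num.Theory.
Local Open Scope ring_scope.

Definition Mmat (C : numClosedFieldType) (n : nat) : 'M[C]_n :=
  \matrix_(i < n, j < n) (if (i < j)%N then 1 else if (j < i)%N then -1 else 0).

Definition Bmat (C : numClosedFieldType) (n : nat) : 'M[C]_n := 'i *: Mmat C n.

Definition Jmat (C : numClosedFieldType) (n : nat) : 'M[C]_n := const_mx 1.

(* Lattice paths encoded as seq bool: true = up step (1,1), false = down (1,-1).
   dyck_ok h s: starting from height h, the path never goes below 0 and ends at 0. *)
Fixpoint dyck_ok (h : nat) (s : seq bool) : bool :=
  match s with
  | [::] => h == 0%N
  | true :: s' => dyck_ok h.+1 s'
  | false :: s' => (0 < h)%N && dyck_ok h.-1 s'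
  end.

Definition is_dyck (s : seq bool) : bool := dyck_ok 0 s.

(* a_{k-1} = (n-k)/(2k-1): weight of an up step from height k-1 to k *)
Definition up_w (C : numClosedFieldType) (n k : nat) : C :=
  (n%:R - k%:R) / ((2 * k)%N%:R - 1).
Definition down_w (C : numClosedFieldType) (n k : nat) : C :=
  (n%:R + k%:R) / ((2 * k)%N%:R + 1).

Fixpoint path_w (C : numClosedFieldType) (n h : nat) (s : seq bool) : C :=
  match s with
  | [::] => 1
  | true :: s' => up_w C n h.+1 * path_w C n h.+1 s'
  | false :: s' => down_w C n h * path_w C n h.-1 s'
  end.

Definition dyck_weight (C : numClosedFieldType) (n : nat) (s : seq bool) : C :=
  path_w C n 0 s.

From HB Require Import structures.
From mathcomp Require Import all_boot all_order all_algebra.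
From mathcomp Require Import ring.
Set Implicit Arguments. Unset Strict Implicit. Unset Printing Implicit Defensive.
Import Order.TTheory GRing.Theory Num.Theory.
Local Open Scope ring_scope.

(* Let t_h be the discrete Chebyshev polynomial of degree h on {0, ..., n-1},
   normalised by t_h(0) = 1, and w_h the vector (i^h t_h(x))_(x < n). The
   three-term recurrence of these polynomials says that B = iM acts on the w_h
   as the transfer matrix of weighted Dyck paths: B w_h = a_h w_(h+1) + b_h w_(h-1),
   where a_(n-1) = 0 keeps the heights below n. Since w_0 is the all-ones vector
   and the entries of w_h sum to 0 for h > 0 (orthogonality to the constants),
   tr(J B^2m) = 1^T B^2m w_0 expands into n times the total weight of the Dyck
   paths of length 2m. *)

Lemma big_tuple_cons (T : finType) (R : nmodType) (k : nat) (F : seq T -> R) :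
  \sum_(t : k.+1.-tuple T) F t = \sum_(b : T) \sum_(t : k.-tuple T) F (b :: t).
Proof.
rewrite pair_big /= (reindex (fun p : T * k.-tuple T => [tuple of p.1 :: p.2])) //=.
exists (fun t : k.+1.-tuple T => (thead t, [tuple of behead t])) => [[b t] _|t _] /=.
  by congr (_, _); apply: val_inj.
by rewrite [RHS]tuple_eta.
Qed.

Section WeightedPaths.

Variables (C : numClosedFieldType) (n : nat).

Definition path_sum (k h : nat) : C :=
  \sum_(t : k.-tuple bool | dyck_ok h t) path_w C n h t.

Lemma path_sum0 h : path_sum 0 h = (h == 0%N)%:R.
Proof.
rewrite /path_sum big_mkcond (big_pred1 [tuple]) /= => [|t]; first by case: h.
by apply/esym/eqP; apply: tuple0.
Qed.

Lemma path_sumS k h : path_sum k.+1 h =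
  up_w C n h.+1 * path_sum k h.+1 +
  (if (0 < h)%N then down_w C n h * path_sum k h.-1 else 0).
Proof.
pose F s := if dyck_ok h s then path_w C n h s else 0.
rewrite /path_sum big_mkcond (big_tuple_cons _ F) big_bool /= !big_distrr /=.
rewrite [in RHS]big_mkcond; congr (_ + _).
rewrite /F /=; case: (0 < h)%N; last by rewrite big1.
by rewrite [RHS]big_mkcond.
Qed.

End WeightedPaths.

Section TridiagonalAction.

Variables (C : numClosedFieldType) (n : nat) (B : 'M[C]_n).
Variables (w : nat -> 'cV[C]_n) (r : 'rV[C]_n) (c : C).

Hypothesis mul_B_w : forall h, (h < n)%N ->
  B *m w h = up_w C n h.+1 *: w h.+1 +
             (if (0 < h)%N then down_w C n h *: w h.-1 else 0).
Hypothesis trace_r_w : forall h, (h < n)%N -> \tr (r *m w h) = (h == 0%N)%:R * c.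

Lemma trace_exp_path_sum k h : (h < n)%N ->
  \tr (r *m (B ^+ k *m w h)) = c * path_sum C n k h.
Proof.
elim: k h => [|k IHk] h hn; first by rewrite mul1mx trace_r_w // path_sum0 mulrC.
rewrite exprSr -mulmxA mul_B_w // mulmxDr !linearD -!scalemxAr !linearZ /=.
rewrite path_sumS mulrDr; congr (_ + _).
  have [hSn|hnS] := ltnP h.+1 n; first by rewrite IHk // mulrCA.
  have -> : h.+1 = n by apply/eqP; rewrite eqn_leq hn hnS.
  by rewrite /up_w subrr !mul0r mulr0.
case: (0 < h)%N; last by rewrite !linear0 mulr0.
by rewrite -!scalemxAr linearZ /= IHk ?(leq_ltn_trans (leq_pred h)) // mulrCA.
Qed.

End TridiagonalAction.

Lemma sum_natr_binomial (R : pzSemiRingType) (N j : nat) :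
  \sum_(y < N) ('C(y, j)%:R : R) = 'C(N, j.+1)%:R.
Proof.
elim: N => [|N IHN]; first by rewrite big_ord0 bin0n.
by rewrite big_ord_recr /= IHN binS natrD.
Qed.

Section NewtonSeries.

Variables (F : numFieldType) (n : nat).

Definition newton_series (c : nat -> F) (x : nat) : F :=
  \sum_(j < n) c j * 'C(x, j)%:R.

Lemma eq_newton_series (c d : nat -> F) x :
  (forall j, (j < n)%N -> c j = d j) -> newton_series c x = newton_series d x.
Proof. by move=> eq_cd; apply: eq_bigr => j _; rewrite eq_cd. Qed.

Lemma newton_series_lincomb a b (c d : nat -> F) x :
  newton_series (fun j => a * c j + b * d j) x =
  a * newton_series c x + b * newton_series d x.
Proof.
by rewrite /newton_series !mulr_sumr -big_split; apply: eq_bigr => j _ /=; ring.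
Qed.

Lemma sum_newton_series (c : nat -> F) N :
  \sum_(y < N) newton_series c y = \sum_(j < n) c j * 'C(N, j.+1)%:R.
Proof.
rewrite exchange_big /=; apply: eq_bigr => j _.
by rewrite -mulr_sumr sum_natr_binomial.
Qed.

Lemma sum_shift_binomial (c : nat -> F) x : (x < n)%N ->
  \sum_(j < n) c j * 'C(x, j.+1)%:R =
  \sum_(j < n) (if j : nat is j'.+1 then c j' else 0) * 'C(x, j)%:R.
Proof.
move=> ltxn; pose g (j : nat) := (if j is j'.+1 then c j' else 0) * 'C(x, j)%:R.
have : \sum_(j < n.+1) g j = \sum_(j < n) g j + g n by rewrite big_ord_recr.
by rewrite big_ord_recl /g /= (bin_small ltxn) mulr0 addr0 mul0r add0r.
Qed.

Lemma sum_newton_series_prefixes (c : nat -> F) x : (x < n)%N ->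
  \sum_(y < x.+1) newton_series c y + \sum_(y < x) newton_series c y =
  newton_series (fun j => c j + if j is j'.+1 then 2 * c j' else 0) x.
Proof.
move=> ltxn; rewrite !sum_newton_series -big_split /=.
transitivity (\sum_(j < n) c j * 'C(x, j)%:R + 2 * \sum_(j < n) c j * 'C(x, j.+1)%:R).
  by rewrite mulr_sumr -big_split; apply: eq_bigr => j _ /=; rewrite binS natrD; ring.
rewrite sum_shift_binomial // mulr_sumr -big_split; apply: eq_bigr => j _ /=.
by case: (nat_of_ord j) => [|j']; ring.
Qed.

End NewtonSeries.

Lemma Mmat_mul_sum (C : numClosedFieldType) n (f : nat -> C) (x : 'I_n) :
  \sum_(y < n) Mmat C n x y * f y =
  \sum_(y < n) f y - (\sum_(y < x.+1) f y + \sum_(y < x) f y).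
Proof.
have sum_lt k : (k <= n)%N -> \sum_(y < n | (y < k)%N) f y = \sum_(y < k) f y.
  by move=> le_kn; rewrite (big_ord_widen n f le_kn).
rewrite -(sum_lt _ (ltn_ord x)) -(sum_lt _ (ltnW (ltn_ord x))).
rewrite [X in X - _](bigID (fun y : 'I_n => (y < x.+1)%N)) /= addrC opprD addrA addrK.
rewrite (big_mkcond (fun y : 'I_n => ~~ (y < x.+1))%N).
rewrite (big_mkcond (fun y : 'I_n => y < x)%N) -sumrB; apply: eq_bigr => y _ /=.
rewrite mxE ltnS -ltnNge.
by case: ltngtP; rewrite ?mul1r ?mulN1r ?mul0r ?subr0 ?sub0r ?subrr.
Qed.

Lemma Mmat_mul_newton_series (C : numClosedFieldType) n (c : nat -> C) (x : 'I_n) :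
  \sum_(y < n) Mmat C n x y * newton_series n c y =
  \sum_(y < n) newton_series n c y -
  newton_series n (fun j => c j + if j is j'.+1 then 2 * c j' else 0) x.
Proof. by rewrite Mmat_mul_sum sum_newton_series_prefixes. Qed.

Section ChebyshevCoefficients.

Variables (F : numFieldType) (n : nat).

Definition cheb_num (y : F) (j : nat) : F :=
  \prod_(i < j) ((y - i%:R) * (y + 1 + i%:R)).

Lemma cheb_numS y j :
  cheb_num y j.+1 = cheb_num y j * ((y - j%:R) * (y + 1 + j%:R)).
Proof. by rewrite /cheb_num big_ord_recr. Qed.

Lemma cheb_num_reflect y j : cheb_num (-1 - y) j = cheb_num y j.
Proof. by apply: eq_bigr => i _; ring. Qed.

Lemma cheb_num_shift_up y j :
  cheb_num (y + 1) j.+1 = cheb_num y j * ((y + 1 + j%:R) * (y + 2 + j%:R)).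
Proof.
elim: j => [|j IHj]; first by rewrite cheb_numS /cheb_num !big_ord0; ring.
by rewrite cheb_numS IHj cheb_numS; ring.
Qed.

Lemma cheb_num_shift_down y j :
  cheb_num (y - 1) j.+1 = cheb_num y j * ((y - j%:R) * (y - 1 - j%:R)).
Proof.
rewrite -cheb_num_reflect (_ : -1 - (y - 1) = (-1 - y) + 1); last by ring.
by rewrite cheb_num_shift_up cheb_num_reflect; congr (_ * _); ring.
Qed.

Lemma cheb_num_nat_eq0 k j : (k < j)%N -> cheb_num k%:R j = 0.
Proof.
by move=> ltkj; apply/eqP/prodf_eq0; exists (Ordinal ltkj); rewrite //= subrr mul0r.
Qed.

Definition cheb_den (j : nat) : F := \prod_(i < j) (i.+1%:R * (n%:R - 1 - i%:R)).

Lemma natr_predB_neq0 i : (i.+1 < n)%N -> n%:R - 1 - i%:R != 0 :> F.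
Proof.
move=> ltin; rewrite -addrA -opprD nat1r -natrB 1?ltnW // pnatr_eq0.
by rewrite -lt0n subn_gt0.
Qed.

Lemma cheb_denS j :
  cheb_den j.+1 = cheb_den j * (j.+1%:R * (n%:R - 1 - j%:R)).
Proof. by rewrite /cheb_den big_ord_recr. Qed.

(* Up to sign, cheb_num y j and cheb_den j are the Pochhammer products
   (-y)_j (y+1)_j and j! (1-n)_j, so that cheb_coef n h j * 'C(x, j) is the
   j-th term of 3F2(-h, h+1, -x; 1, 1-n; 1), the discrete Chebyshev polynomial
   of degree h in x normalised to 1 at x = 0. *)
Definition cheb_coef (y : F) (j : nat) : F := (-1) ^+ j * cheb_num y j / cheb_den j.

Lemma cheb_coef0 y : cheb_coef y 0 = 1.
Proof. by rewrite /cheb_coef /cheb_num /cheb_den !big_ord0 mulr1 divr1. Qed.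

Lemma cheb_coefS y j : cheb_coef y j.+1 =
  - ((-1) ^+ j / cheb_den j) * cheb_num y j.+1 / (j.+1%:R * (n%:R - 1 - j%:R)).
Proof. by rewrite /cheb_coef cheb_denS exprS invfM; ring. Qed.

Lemma cheb_coef_nat_eq0 k j : (k < j)%N -> cheb_coef k%:R j = 0.
Proof. by move=> ltkj; rewrite /cheb_coef cheb_num_nat_eq0 // mulr0 mul0r. Qed.

Lemma cheb_coef_rec y j : (j < n)%N ->
  (2 * y + 1) * (cheb_coef y j + if j is j'.+1 then 2 * cheb_coef y j' else 0) =
  (n%:R + y) * cheb_coef (y - 1) j - (n%:R - y - 1) * cheb_coef (y + 1) j.
Proof.
case: j => [_|j ltjn] /=; first by rewrite !cheb_coef0; ring.
have -> : cheb_coef y j = (-1) ^+ j / cheb_den j * cheb_num y j.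
  by rewrite /cheb_coef mulrAC.
rewrite !cheb_coefS cheb_num_shift_down cheb_num_shift_up cheb_numS.
move: ((-1) ^+ j / cheb_den j) (cheb_num y j) => u p.
have jS_neq0 : j.+1%:R != 0 :> F by rewrite pnatr_eq0.
by field; rewrite natr_predB_neq0 // nat1r jS_neq0.
Qed.

Lemma cheb_coef_telescope y m : y * (y + 1) != 0 -> (m < n)%N ->
  \sum_(j < m.+1) cheb_coef y j * 'C(n, j.+1)%:R =
  cheb_coef y m * 'C(n, m.+1)%:R * (y * (y + 1) - m%:R * (m%:R + 1)) / (y * (y + 1)).
Proof.
move=> ly_neq0; elim: m => [_|m IHm ltmn]; first by rewrite big_ord1 mul0r subr0 mulfK.
rewrite big_ord_recr /= (IHm (ltnW ltmn)).
have mS2_neq0 : m.+2%:R != 0 :> F by rewrite pnatr_eq0.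
have -> : 'C(n, m.+2)%:R = (n%:R - 1 - m%:R) * 'C(n, m.+1)%:R / m.+2%:R :> F.
  rewrite -[LHS](mulKf mS2_neq0) -natrM mul_bin_left natrM natrB ?(ltnW ltmn) //.
  by rewrite mulrC; ring.
have -> : cheb_coef y m = (-1) ^+ m / cheb_den m * cheb_num y m.
  by rewrite /cheb_coef mulrAC.
rewrite cheb_coefS cheb_numS; move: ((-1) ^+ m / cheb_den m) (cheb_num y m) => u p.
have /andP[yS_neq0 y_neq0] : (y + 1 != 0) && (y != 0).
  by rewrite -negb_or orbC -mulf_eq0.
by field; rewrite yS_neq0 y_neq0 natr_predB_neq0 // nat1r -natrD !pnatr_eq0.
Qed.

Lemma sum_cheb_coef_binomial k : (0 < k < n)%N ->
  \sum_(j < n) cheb_coef k%:R j * 'C(n, j.+1)%:R = 0.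
Proof.
case/andP=> k_gt0 ltkn; have n_gt0 : (0 < n)%N := ltn_trans k_gt0 ltkn.
have lk_neq0 : k%:R * (k%:R + 1) != 0 :> F.
  by rewrite natr1 -natrM pnatr_eq0 muln_eq0 negb_or -!lt0n k_gt0.
rewrite -(big_mkord xpredT (fun j => cheb_coef k%:R j * 'C(n, j.+1)%:R)).
rewrite -{1}(prednK n_gt0) big_mkord cheb_coef_telescope ?ltn_predL //.
move: ltkn; rewrite -{1}(prednK n_gt0) ltnS leq_eqVlt => /orP [/eqP ->|ltk].
  by rewrite subrr mulr0 mul0r.
by rewrite cheb_coef_nat_eq0 // !mul0r.
Qed.

End ChebyshevCoefficients.

Section DiscreteChebyshev.

Variables (C : numClosedFieldType) (n : nat).

Definition cheb (h x : nat) : C := newton_series n (cheb_coef n h%:R) x.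

Lemma cheb0 x : (0 < n)%N -> cheb 0 x = 1.
Proof.
move=> n_gt0; rewrite /cheb /newton_series (bigD1 (Ordinal n_gt0)) //=.
rewrite cheb_coef0 mul1r bin0.
rewrite big1 ?addr0 // => j j_neq0; rewrite cheb_coef_nat_eq0 ?mul0r // lt0n.
by apply: contraNneq j_neq0 => j0; rewrite -val_eqE /= j0.
Qed.

Lemma sum_cheb h : (h < n)%N -> \sum_(x < n) cheb h x = (h == 0%N)%:R * n%:R.
Proof.
case: h => [|h] lthn /=.
  by rewrite (eq_bigr (fun=> 1)) => [|x _]; rewrite ?cheb0 // sumr_const card_ord mul1r.
by rewrite sum_newton_series sum_cheb_coef_binomial ?mul0r.
Qed.

(* At h = 0 the truncated h.-1 is harmless: the coefficients are invariant
   under y |-> -1 - y. *)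
Lemma cheb_coef_pred h j : cheb_coef n (h%:R - 1 : C) j = cheb_coef n h.-1%:R j.
Proof.
case: h => [|h]; last by rewrite -natr1 addrK.
by rewrite /cheb_coef sub0r -[-1]subr0 cheb_num_reflect.
Qed.

Lemma cheb_coef_rec_nat h j : (j < n)%N ->
  cheb_coef n h%:R j + (if j is j'.+1 then 2 * cheb_coef n h%:R j' else 0) =
  down_w C n h * cheb_coef n h.-1%:R j - up_w C n h.+1 * cheb_coef n h.+1%:R j.
Proof.
move=> ltjn; have := cheb_coef_rec (h%:R : C) ltjn; rewrite cheb_coef_pred natr1.
have d_neq0 : 2 * h%:R + 1 != 0 :> C by rewrite -natrM natr1 pnatr_eq0.
rewrite /down_w /up_w.
have -> : (2 * h.+1)%:R - 1 = 2 * h%:R + 1 :> C by rewrite natrM; ring.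
have -> : (2 * h)%:R + 1 = 2 * h%:R + 1 :> C by rewrite natrM.
by move=> rec; apply: (mulfI d_neq0); rewrite rec; field.
Qed.

Lemma Mmat_mul_cheb h (x : 'I_n) : (h < n)%N ->
  \sum_(y < n) Mmat C n x y * cheb h y =
  (h == 0%N)%:R * n%:R + up_w C n h.+1 * cheb h.+1 x - down_w C n h * cheb h.-1 x.
Proof.
move=> lthn; rewrite Mmat_mul_newton_series sum_cheb //.
rewrite (@eq_newton_series _ _ _ (fun j => down_w C n h * cheb_coef n h.-1%:R j +
                                         (- up_w C n h.+1) * cheb_coef n h.+1%:R j)).
  by rewrite newton_series_lincomb /cheb; ring.
by move=> j ltjn; rewrite cheb_coef_rec_nat // mulNr.
Qed.

(* The factor 'i^h turns the recurrence of M, whose two off-diagonal terms have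
   opposite signs, into one for B = 'i M with the positive path weights. *)
Definition cheb_vec (h : nat) : 'cV[C]_n := \col_(x < n) ('i ^+ h * cheb h x).

Lemma cheb_vec0 : (0 < n)%N -> cheb_vec 0 = const_mx 1.
Proof. by move=> n_gt0; apply/matrixP => x z; rewrite !mxE cheb0 // mulr1. Qed.

Lemma trace_const_mul_cheb_vec h : (h < n)%N ->
  \tr (const_mx 1 *m cheb_vec h) = (h == 0%N)%:R * n%:R.
Proof.
move=> lthn; rewrite /mxtrace big_ord1 !mxE.
rewrite (eq_bigr (fun x : 'I_n => 'i ^+ h * cheb h x)) => [|x _]; last first.
  by rewrite !mxE mul1r.
by rewrite -mulr_sumr sum_cheb //; case: h {lthn} => [|h]; rewrite ?mul1r ?mul0r ?mulr0.
Qed.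

Lemma Bmat_mul_cheb_vec h : (h < n)%N ->
  Bmat C n *m cheb_vec h = up_w C n h.+1 *: cheb_vec h.+1 +
                           (if (0 < h)%N then down_w C n h *: cheb_vec h.-1 else 0).
Proof.
move=> lthn; apply/matrixP => x z; rewrite !mxE.
have -> : \sum_y Bmat C n x y * cheb_vec h y z =
          'i ^+ h.+1 * \sum_(y < n) Mmat C n x y * cheb h y.
  by rewrite mulr_sumr; apply: eq_bigr => y _; rewrite !mxE exprS; ring.
rewrite Mmat_mul_cheb //; case: h lthn => [|h] lthn /=.
  by rewrite cheb0 ?(leq_ltn_trans _ lthn) // !mxE /down_w; field.
have iSS : 'i ^+ h.+2 = - 'i ^+ h :> C by rewrite !exprS mulrA mulCii mulN1r.
by rewrite !mxE iSS; ring.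
Qed.

End DiscreteChebyshev.

Theorem theorem5p2 (C : numClosedFieldType) (n m : nat) (hn : (1 <= n)%N) :
  \tr (Jmat C n *m Bmat C n ^+ (2 * m)) =
  n%:R * \sum_(t : (2 * m).-tuple bool | is_dyck t) dyck_weight C n t.
Proof.
have Jmat_rank1 : Jmat C n = const_mx 1 *m (const_mx 1 : 'rV[C]_n).
  by apply/matrixP => i j; rewrite !mxE big_ord1 !mxE mul1r.
rewrite Jmat_rank1 -mulmxA mxtrace_mulC -mulmxA -(cheb_vec0 C hn).
by rewrite (trace_exp_path_sum (@Bmat_mul_cheb_vec C n)
                               (@trace_const_mul_cheb_vec C n)).
Qed.
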